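(* For each $h\in\{1,2\}$, let $\mathrm{bd}_h\in\mathbb{BD}_n$ be a non-empty rational BD shape represented by the closed graph $G_h=(\mathcal{N},w_h)$, and let $R_h$ be a subgraph of $G_h$ such that $\mathrm{closure}(R_h)=G_h$. Let $G_1\sqcup G_2=(\mathcal{N},w)$. Then $\mathrm{bd}_1\uplus\mathrm{bd}_2\neq\mathrm{bd}_1\cup\mathrm{bd}_2$ if and only if there exist an arc $(i,j)$ of $R_1$ and an arc $(k,\ell)$ of $R_2$ such that (1) $w_1(i,j)<w_2(i,j)$ and $w_2(k,\ell)<w_1(k,\ell)$; and (2) $w_1(i,j)+w_2(k,\ell)<w(i,\ell)+w(k,j)$.
   Context: Let $\mathbb{Q}_\infty=\mathbb{Q}\cup\{+\infty\}$ with $d<+\infty$ and $d+(+\infty)=+\infty$ for all $d$. Let $\mathcal{N}=\{0,1,\dots,n\}$. A graph is a pair $(\mathcal{N},w)$ with $w:\mathcal{N}\times\mathcal{N}\to\mathbb{Q}_\infty$; $(i,j)$ is an arc if $w(i,j)<+\infty$. A path $n_0\cdots n_p$ has weight $\sum_{t=1}^p w(n_{t-1},n_t)$; the graph is consistent if it has no cycle of negative weight. Graphs are ordered by $G\unlhd G'$ iff $w(i,j)\le w'(i,j)$ for all $i,j$. A consistent graph is closed if $w(i,i)=0$ for all $i$ and $w(i,j)\le w(i,k)+w(k,j)$ for all $i,j,k$. The closure $\mathrm{closure}(G)$ of a consistent graph $G$ is the least upper bound (pointwise maximum) of all closed graphs $G^c\unlhd G$. $R=(\mathcal{N},w_R)$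 is a subgraph of $G=(\mathcal{N},w_G)$ if every arc of $R$ is an arc of $G$ with the same weight. A BD (bounded difference) shape is a subset of $\mathbb{R}^n$ defined by finitely many constraints of the forms $\pm x_i\le b$ or $x_i-x_j\le b$ ($i\neq j$, $b\in\mathbb{Q}$); $\mathbb{BD}_n$ is the set of them. A consistent graph $G=(\mathcal{N},w)$ represents the BD shape $\{\mathbf{x}\in\mathbb{R}^n : x_i-x_j\le w(i,j)\ \forall i,j\in\mathcal{N}\}$ where $x_0:=0$ (arc $(i,j)$ encodes $x_i-x_j\le w(i,j)$, $(i,0)$ encodes $x_i\le w(i,0)$, $(0,j)$ encodes $-x_j\le w(0,j)$). $G_1\sqcup G_2=(\mathcal{N},w)$ with $w(i,j)=\max(w_1(i,j),w_2(i,j))$. $\mathrm{bd}_1\uplus\mathrm{bd}_2$ is the least BD shape containing $\mathrm{bd}_1\cup\mathrm{bd}_2$; when $G_1,G_2$ are closed it is represented by $G_1\sqcup G_2$. *)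

From HB Require Import structures.
From mathcomp Require Import all_boot all_order all_algebra.
From mathcomp Require Import classical_sets reals.
Set Implicit Arguments. Unset Strict Implicit. Unset Printing Implicit Defensive.
Import Order.TTheory GRing.Theory Num.Theory.
Local Open Scope ring_scope.
Local Open Scope classical_set_scope.

(* Q_oo = Q u {+oo}: [Some q] is q, [None] is +oo. *)
Definition qinf := option rat.

Definition addQ (a b : qinf) : qinf :=
  match a, b with Some x, Some y => Some (x + y) | _, _ => None end.

Definition leQ (a b : qinf) : bool :=
  match a, b with
  | _, None => true
  | None, Some _ => false
  | Some x, Some y => x <= y
  end.

Definition ltQ (a b : qinf) : bool :=
  match a, b with
  | None, _ => false
  | Some _, None => true
  | Some x, Some y => x < y
  end.

Definition maxQ (a b : qinf) : qinf := if leQ a b then b else a.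

Definition graph (n : nat) := 'I_n.+1 -> 'I_n.+1 -> qinf.

Definition is_arc n (G : graph n) i j : Prop := G i j <> None.

Fixpoint pweight n (G : graph n) (x : 'I_n.+1) (s : seq 'I_n.+1) : qinf :=
  match s with
  | [::] => Some 0
  | y :: s' => addQ (G x y) (pweight G y s')
  end.

(* no cycle of negative weight (paths through non-arcs have weight +oo) *)
Definition consistent n (G : graph n) : Prop :=
  forall x s, last x s = x -> leQ (Some 0) (pweight G x s).

Definition gle n (G G' : graph n) : Prop := forall i j, leQ (G i j) (G' i j).

Definition closed_graph n (G : graph n) : Prop :=
  [/\ consistent G, forall i, G i i = Some 0 &
      forall i j k, leQ (G i j) (addQ (G i k) (G k j))].

Definition is_closure n (G C : graph n) : Prop :=
  (forall Gc, closed_graph Gc -> gle Gc G -> gle Gc C) /\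
  (forall U, (forall Gc, closed_graph Gc -> gle Gc G -> gle Gc U) -> gle C U).

Definition subgraph n (R G : graph n) : Prop :=
  forall i j, is_arc R i j -> R i j = G i j.

Definition gjoin n (G1 G2 : graph n) : graph n := fun i j => maxQ (G1 i j) (G2 i j).

(* value of the variable x_i, with x_0 := 0 *)
Definition xval (R : realType) n (x : 'I_n -> R) (i : 'I_n.+1) : R :=
  match unlift ord0 i with Some j => x j | None => 0 end.

Definition bd_shape (R : realType) n (G : graph n) : set ('I_n -> R) :=
  [set x | forall i j, match G i j with
                       | None => true
                       | Some b => xval x i - xval x j <= ratr b end].

(* rational BD shapes: finitely many constraints x_i - x_j <= b, i <> j,
   where index 0 stands for the constant 0 (so this covers +-x_i <= b) *)
Definition is_BD (R : realType) n (S : set ('I_n -> R)) : Prop :=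
  exists cs : seq ('I_n.+1 * 'I_n.+1 * rat),
    all (fun c => c.1.1 != c.1.2) cs /\
    S = [set x | forall c, c \in cs -> xval x c.1.1 - xval x c.1.2 <= ratr c.2].

Definition bd_hull (R : realType) n (S : set ('I_n -> R)) : set ('I_n -> R) :=
  [set x | forall B, is_BD B -> S `<=` B -> B x].

From mathcomp Require Import all_boot all_order all_algebra.
From mathcomp Require Import classical_sets reals.
From mathcomp Require Import boolp lra.
Import Order.TTheory GRing.Theory Num.Theory.
Local Open Scope ring_scope.
Local Open Scope classical_set_scope.

Set Implicit Arguments. Unset Strict Implicit.

(* A closed graph is tight: each finite weight is the supremum of the
   corresponding difference over its solutions, so the BD hull of the union of
   two non-empty closed shapes is the shape of [G1 ⊔ G2].  A solution of [R_h]
   already solves [closure R_h = G_h], because rounding it down onto a grid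
   containing every weight of [R_h] gives a closed potential graph below
   [R_h].  Hence a point of the hull outside both shapes violates an arc of
   [R1] and an arc of [R2], and these two violations yield (1) and (2).
   Conversely, from such arcs, capping a solution of [G1 ⊔ G2] along [j] and
   along [l] yields a point of the hull outside both shapes. *)

Lemma ltQNge a b : ltQ a b = ~~ leQ b a.
Proof. by case: a => [x|]; case: b => [y|] //=; rewrite ltNge. Qed.

Lemma leQ_Some a g : leQ a (Some g) -> exists2 g1, a = Some g1 & g1 <= g.
Proof. by case: a => [x|] //= h; exists x. Qed.

Lemma leQ_trans a b c : leQ a b -> leQ b c -> leQ a c.
Proof. by case: a => [x|]; case: b => [y|]; case: c => [z|] //=; apply: le_trans. Qed.

Lemma leQ_addQ a a' b b' : leQ a a' -> leQ b b' -> leQ (addQ a b) (addQ a' b').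
Proof.
by case: a => [x|]; case: a' => [x'|]; case: b => [y|]; case: b' => [y'|] //=; apply: lerD.
Qed.

Lemma leQ_maxQl a b : leQ a (maxQ a b).
Proof.
rewrite /maxQ; case: a => [x|]; case: b => [y|] //=.
by case: ifP => // /negbT; rewrite -ltNge => /ltW.
Qed.

Lemma leQ_maxQr a b : leQ b (maxQ a b).
Proof.
rewrite /maxQ; case: a => [x|]; case: b => [y|] //=.
by case: ifP => // /negbT; rewrite -ltNge => /ltW.
Qed.

Lemma maxQ_leQ a b c : leQ a c -> leQ b c -> leQ (maxQ a b) c.
Proof. by rewrite /maxQ; case: ifP. Qed.

Lemma maxQ_ltQr a b : ltQ a b -> maxQ a b = b.
Proof. by rewrite /maxQ; case: a => [x|]; case: b => [y|] //= /ltW ->. Qed.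

Lemma maxQ_ltQl a b : ltQ b a -> maxQ a b = a.
Proof. by rewrite /maxQ; case: a => [x|]; case: b => [y|] //=; rewrite leNgt => ->. Qed.

Lemma ltQ_maxQl a b c : ltQ a (maxQ b c) -> leQ b a -> ltQ a c.
Proof.
rewrite !ltQNge => /negP hab hba; apply/negP => hca.
by apply: hab; apply: maxQ_leQ.
Qed.

Lemma ltQ_maxQr a b c : ltQ a (maxQ b c) -> leQ c a -> ltQ a b.
Proof.
rewrite !ltQNge => /negP hab hca; apply/negP => hba.
by apply: hab; apply: maxQ_leQ.
Qed.

Section Potentials.
Variable R : realType.
Variable n : nat.
Implicit Types (G : graph n) (y p : 'I_n.+1 -> R).

Definition solves G y := forall u v g, G u v = Some g -> y u - y v <= ratr g.

Definition triangle G := forall i j k, leQ (G i j) (addQ (G i k) (G k j)).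

Lemma bd_shapeP G (x : 'I_n -> R) : bd_shape G x <-> solves G (xval x).
Proof.
split; first by move=> h u v g huv; have := h u v; rewrite huv.
by move=> h u v; case E: (G u v) => [g|] //; apply: h.
Qed.

Definition point_of y : 'I_n -> R := fun j => y (lift ord0 j) - y ord0.

Lemma xval_point_of y u : xval (point_of y) u = y u - y ord0.
Proof.
by rewrite /xval; case: unliftP => [j ->|->]; rewrite ?subrr.
Qed.

Lemma bd_shape_point_of G y : bd_shape G (point_of y) <-> solves G y.
Proof.
rewrite bd_shapeP; split=> h u v g /h; rewrite !xval_point_of;
  by rewrite opprB addrA subrK.
Qed.

Lemma solves_shift G p (M : R) : solves G p -> solves G (fun v => p v + M).
Proof. by move=> hp u v g /hp; rewrite opprD addrACA subrr addr0. Qed.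

Lemma solves_gle G G' p : gle G G' -> solves G p -> solves G' p.
Proof.
move=> hle hp u v g h; have := hle u v; rewrite h => /leQ_Some [g1 h1 le].
by apply: le_trans (hp _ _ _ h1) _; rewrite ler_rat.
Qed.

Lemma not_solves G y :
  ~ solves G y -> exists u v g, G u v = Some g /\ ratr g < y u - y v.
Proof.
move=> h; apply: contrapT => hn; apply: h => u v g e.
by rewrite leNgt; apply/negP => lt; apply: hn; exists u, v, g.
Qed.

Lemma solves_ltQ G y u v a :
  solves G y -> ratr a < y u - y v -> ltQ (Some a) (G u v).
Proof.
move=> hy hlt; case E: (G u v) => [g|] //=.
by rewrite -(ltr_rat R); apply: lt_le_trans hlt (hy _ _ _ E).
Qed.

Lemma solves_ltQ_cross G y i j k l a b :
  solves G y -> ratr a < y i - y j -> ratr b < y k - y l ->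
  ltQ (Some (a + b)) (addQ (G i l) (G k j)).
Proof.
move=> hy ha hb.
case Eil: (G i l) => [g1|] //; case Ekj: (G k j) => [g2|] //=.
have := hy _ _ _ Eil; have := hy _ _ _ Ekj.
rewrite -(ltr_rat R) !rmorphD /=; lra.
Qed.

(* By the triangle inequality through [j], capping a solution at
   [c + G v j] keeps it a solution. *)
Definition clip G j (c : R) p v :=
  if G v j is Some g then Num.min (c + ratr g) (p v) else p v.

Lemma clip_le G j c p v : clip G j c p v <= p v.
Proof. by rewrite /clip; case: (G v j) => [g|] //; rewrite ge_min lexx orbT. Qed.

Lemma clip_le_arc G j c p v g : G v j = Some g -> clip G j c p v <= c + ratr g.
Proof. by rewrite /clip => ->; rewrite ge_min lexx. Qed.

Lemma clip_gt G j c p v l :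
  (forall g, G v j = Some g -> l < c + ratr g) -> l < p v -> l < clip G j c p v.
Proof.
by rewrite /clip; case: (G v j) => [g|] // h1 h2; rewrite lt_min h1.
Qed.

Lemma solves_clip G j c p : triangle G -> solves G p -> solves G (clip G j c p).
Proof.
move=> hT hp u v g huv.
have hpu : clip G j c p u - p v <= ratr g.
  by have := clip_le G j c p u; have := hp _ _ _ huv; lra.
rewrite {2}/clip; case E: (G v j) => [h|] //.
rewrite minEle; case: ifP => // _.
have := hT u j v; rewrite huv E => /leQ_Some [e He le].
have := clip_le_arc c p He.
have : ratr e <= ratr g + ratr h :> R by rewrite -rmorphD ler_rat.
lra.
Qed.

Lemma split_sum_gap (a b : rat) (s t : qinf) :
  ltQ (Some (a + b)) (addQ s t) -> exists d : R,
    (forall g, s = Some g -> ratr a < d + ratr g) /\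
    (forall g, t = Some g -> ratr b + d < ratr g).
Proof.
case: s => [g1|]; case: t => [g2|] /= h.
- exists ((ratr a - ratr g1 + ratr g2 - ratr b) / 2).
  have : ratr (a + b) < ratr (g1 + g2) :> R by rewrite ltr_rat.
  by rewrite !rmorphD /= => h'; split => g [<-]; lra.
- by exists (ratr a - ratr g1 + 1); split => g // [<-]; lra.
- by exists (ratr g2 - ratr b - 1); split => g // [<-]; lra.
- by exists 0; split.
Qed.

(* Shift [p] up, then cap it along [j] at height 0 and along [l] at height
   [d], where [d] splits the gap between [a + b] and [G i l + G k j]. *)
Lemma tight_pair G p i j k l (a b : rat) :
  triangle G -> (forall v, G v v = Some 0) -> solves G p ->
  ltQ (Some a) (G i j) -> ltQ (Some b) (G k l) ->
  ltQ (Some (a + b)) (addQ (G i l) (G k j)) ->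
  exists2 y, solves G y & ratr a < y i - y j /\ ratr b < y k - y l.
Proof.
move=> hT hd hp hij hkl /split_sum_gap [d [hil hkj]].
pose M := `|ratr a - p i| + `|ratr b + d - p k| + 1.
pose q := clip G j 0 (fun v => p v + M).
exists (clip G l d q); first by do 2 apply: solves_clip => //; apply: solves_shift.
have yj : clip G l d q j <= 0.
  apply: le_trans (clip_le _ _ _ _ _) _.
  by have := clip_le_arc 0 (fun v => p v + M) (hd j); rewrite rmorph0 addr0.
have yl : clip G l d q l <= d.
  by have := clip_le_arc d q (hd l); rewrite rmorph0 addr0.
have [Mi Mk] : ratr a < p i + M /\ ratr b + d < p k + M.
  have := ler_norm (ratr a - p i); have := ler_norm (ratr b + d - p k).
  have := normr_ge0 (ratr a - p i); have := normr_ge0 (ratr b + d - p k).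
  by rewrite /M; lra.
have yi : ratr a < clip G l d q i.
  apply: clip_gt; first exact: hil.
  apply: clip_gt Mi.
  by move=> g Eg; move: hij; rewrite Eg /= add0r ltr_rat.
have yk : ratr b + d < clip G l d q k.
  apply: clip_gt.
    move=> g Eg; move: hkl; rewrite Eg /= -(ltr_rat R); lra.
  apply: clip_gt Mk.
  by move=> g /hkj; rewrite add0r.
by split; lra.
Qed.

Lemma tight_bound G p u v (q : rat) :
  triangle G -> (forall v, G v v = Some 0) -> solves G p ->
  (forall y, solves G y -> y u - y v <= ratr q) -> leQ (G u v) (Some q).
Proof.
move=> hT hd hp hall; apply: contraT; rewrite -ltQNge => hlt.
have [y hy [hq _]] : exists2 y, solves G y & ratr q < y u - y v /\ ratr q < y u - y v.
  apply: (tight_pair hT hd hp hlt hlt).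
  by move: hlt; case: (G u v) => [g|] //= hg; apply: ltrD.
by have := hall y hy; rewrite leNgt hq.
Qed.

End Potentials.

Lemma floor_subr_le (R : archiRealFieldType) (x y : R) (N : int) :
  x - y <= N%:~R -> Num.floor x - Num.floor y <= N.
Proof.
move=> hxy; rewrite -ltzD1 -(ltr_int R) intrB intrD.
have := floor_le x; have := floorD1_gt y; rewrite intrD; lra.
Qed.

Lemma floor_subr_gt (R : archiRealFieldType) (x y : R) :
  x - y - 1 < (Num.floor x - Num.floor y)%:~R.
Proof. by have := floor_le y; have := floorD1_gt x; rewrite intrB intrD; lra. Qed.

Lemma rat_mulr_den (r : rat) (K : nat) :
  (`|denq r| %| K)%N -> r * K%:R = ((K %/ `|denq r|)%N%:Z * numq r)%:~R.
Proof.
move=> /divnK {1}<-; rewrite natrM intrM mulrC -mulrA; congr (_ * _).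
have -> : (`|denq r|%:R : rat) = (denq r)%:~R by rewrite -absz_denq.
by rewrite mulrC -{1}(divq_num_den r) divfK // intr_eq0 denq_neq0.
Qed.

Section ClosureSoundness.
Variable R : realType.
Variable n : nat.
Implicit Types (G : graph n) (X : 'I_n.+1 -> R).

Definition pot_graph (phi : 'I_n.+1 -> rat) : graph n :=
  fun u v => Some (phi u - phi v).

Lemma pweight_pot_graph phi x s :
  pweight (pot_graph phi) x s = Some (phi x - phi (last x s)).
Proof.
elim: s x => [|y s IH] x /=; first by rewrite subrr.
by rewrite IH /pot_graph /= addrA subrK.
Qed.

Lemma pot_graph_closed phi : closed_graph (pot_graph phi).
Proof.
split=> [x s hl|i|i j k]; rewrite ?pweight_pot_graph ?hl /pot_graph /= ?subrr //.
by rewrite addrA subrK.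
Qed.

Definition common_den G : nat :=
  \prod_(u : 'I_n.+1) \prod_(v : 'I_n.+1)
     (if G u v is Some r then `|denq r| else 1)%N.

Lemma common_den_gt0 G : (0 < common_den G)%N.
Proof.
apply: prodn_gt0 => u; apply: prodn_gt0 => v.
by case: (G u v) => [r|] //; rewrite absz_gt0 denq_neq0.
Qed.

Lemma denq_dvd_common_den G u v r : G u v = Some r -> (`|denq r| %| common_den G)%N.
Proof.
move=> E; rewrite /common_den (bigD1 u) //= dvdn_mulr // (bigD1 v) //=.
by rewrite E dvdn_mulr.
Qed.

Definition floor_pot X (K : nat) u : rat := (Num.floor (K%:R * X u))%:~R / K%:R.

Lemma ratr_floor_pot X K u v :
  ratr (floor_pot X K u - floor_pot X K v) =
  (Num.floor (K%:R * X u) - Num.floor (K%:R * X v))%:~R / K%:R :> R.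
Proof. by rewrite rmorphB /= !fmorph_div /= !ratr_int ratr_nat -mulrBl -intrB. Qed.

(* Every bound [K r] of [K G] is an integer, so rounding [K X] down keeps the
   constraints. *)
Lemma floor_pot_gle G X K :
  (0 < K)%N -> (common_den G %| K)%N -> solves G X -> gle (pot_graph (floor_pot X K)) G.
Proof.
move=> K0 dvdK hX u v; rewrite /pot_graph; case E: (G u v) => [r|] //=.
have hr : ratr r * K%:R = ((K %/ `|denq r|)%N%:Z * numq r)%:~R :> R.
  rewrite -ratr_nat -rmorphM /= rat_mulr_den ?ratr_int //.
  exact: dvdn_trans (denq_dvd_common_den E) dvdK.
rewrite -(ler_rat R) ratr_floor_pot ler_pdivrMr ?ltr0n // hr ler_int.
apply: floor_subr_le; rewrite -hr -mulrBr mulrC ler_pM2r ?ltr0n //.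
exact: hX.
Qed.

Lemma floor_pot_gt X K u v : (0 < K)%N ->
  X u - X v - K%:R^-1 < ratr (floor_pot X K u - floor_pot X K v).
Proof.
move=> K0; have K0' : 0 < K%:R :> R by rewrite ltr0n.
rewrite ratr_floor_pot ltr_pdivlMr //.
have := floor_subr_gt (K%:R * X u) (K%:R * X v).
by rewrite mulrBl mulVf ?gt_eqF // -!mulrBr [_ * K%:R]mulrC.
Qed.

Lemma closure_solves (Rg G : graph n) X :
  (forall Gc, closed_graph Gc -> gle Gc Rg -> gle Gc G) ->
  solves Rg X -> solves G X.
Proof.
move=> lub hX u v g E; rewrite leNgt; apply/negP => hlt.
pose d := X u - X v - ratr g.
have d0 : 0 < d by rewrite /d; lra.
pose K := (common_den Rg * (Num.Def.archi_bound d^-1).+1)%N.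
have K0 : (0 < K)%N by rewrite muln_gt0 common_den_gt0.
have Kd : K%:R^-1 < d.
  rewrite invf_plt ?posrE ?ltr0n //.
  have hm : d^-1 < (Num.Def.archi_bound d^-1)%:R.
    by apply: archi_boundP; rewrite invr_ge0 ltW.
  apply: lt_le_trans hm _.
  by rewrite ler_nat /K -{1}[Num.Def.archi_bound _]mul1n leq_mul ?common_den_gt0.
have below := floor_pot_gle K0 (dvdn_mulr _ (dvdnn _)) hX.
have := lub _ (pot_graph_closed (floor_pot X K)) below u v.
rewrite E /= -(ler_rat R) => hle.
by have := floor_pot_gt X u v K0; rewrite /d in Kd; lra.
Qed.

End ClosureSoundness.

Section Join.
Variable R : realType.
Variable n : nat.
Implicit Types (G : graph n) (y : 'I_n.+1 -> R).

Lemma gjoin_triangle G1 G2 : triangle G1 -> triangle G2 -> triangle (gjoin G1 G2).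
Proof.
move=> h1 h2 i j k; apply: maxQ_leQ.
  by apply: leQ_trans (h1 i j k) _; apply: leQ_addQ; apply: leQ_maxQl.
by apply: leQ_trans (h2 i j k) _; apply: leQ_addQ; apply: leQ_maxQr.
Qed.

Lemma bd_shape_is_BD G : (forall i, G i i = Some 0) -> is_BD (@bd_shape R n G).
Proof.
move=> hd.
exists [seq (p.1, p.2, odflt 0 (G p.1 p.2)) |
        p <- enum [pred p : 'I_n.+1 * 'I_n.+1 | (p.1 != p.2) && (G p.1 p.2 != None)]].
split; first by apply/allP => c /mapP [p]; rewrite mem_enum => /andP [hne _] ->.
apply/seteqP; split => x hx.
  move=> c /mapP [p]; rewrite mem_enum => /andP [_ hN] -> /=.
  by case E: (G p.1 p.2) hN => [g|] // _; have := hx p.1 p.2; rewrite E.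
move=> u v; case E: (G u v) => [g|] //; case: (eqVneq u v) E => [<-|huv] E.
  by move: E; rewrite hd => -[<-]; rewrite subrr rmorph0.
apply: (hx (u, v, g)); apply/mapP; exists (u, v) => /=; last by rewrite E.
by rewrite mem_enum inE /= huv E.
Qed.

Lemma bd_shape_gjoin_sup G1 G2 :
  @bd_shape R n G1 `|` bd_shape G2 `<=` bd_shape (gjoin G1 G2).
Proof.
move=> x [] /bd_shapeP hx; apply/bd_shapeP; apply: solves_gle hx => u v.
  exact: leQ_maxQl.
exact: leQ_maxQr.
Qed.

Lemma bd_shape_bound G u v (q : rat) :
  closed_graph G -> @bd_shape R n G !=set0 ->
  (forall x : 'I_n -> R, bd_shape G x -> xval x u - xval x v <= ratr q) ->
  leQ (G u v) (Some q).
Proof.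
move=> [_ hd hT] [x /bd_shapeP hx] hall; apply: tight_bound hT hd hx _ => y hy.
have := hall _ (iffRL (bd_shape_point_of G y) hy); rewrite !xval_point_of; lra.
Qed.

(* Tightness of [G1] and [G2] turns every BD constraint valid on both shapes
   into a bound on their weights. *)
Lemma bd_hull_shape_gjoin G1 G2 :
  closed_graph G1 -> closed_graph G2 ->
  @bd_shape R n G1 !=set0 -> @bd_shape R n G2 !=set0 ->
  bd_hull (@bd_shape R n G1 `|` bd_shape G2) = bd_shape (gjoin G1 G2).
Proof.
move=> hG1 hG2 ne1 ne2; have [_ hd1 _] := hG1; have [_ hd2 _] := hG2.
apply/seteqP; split => x hx.
  apply: hx; last exact: bd_shape_gjoin_sup.
  by apply: bd_shape_is_BD => i; rewrite /gjoin hd1 hd2.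
move=> B [cs [_ eB]] sub; rewrite eB => c hc.
have hB G : bd_shape G `<=` B ->
    forall x : 'I_n -> R, bd_shape G x -> xval x c.1.1 - xval x c.1.2 <= ratr c.2.
  by move=> sG z hz; have := sG z hz; rewrite eB; apply.
have l1 := bd_shape_bound hG1 ne1 (hB _ (fun z h => sub z (or_introl h))).
have l2 := bd_shape_bound hG2 ne2 (hB _ (fun z h => sub z (or_intror h))).
have [g hg le] := leQ_Some (maxQ_leQ l1 l2).
by apply: le_trans (iffLR (bd_shapeP _ _) hx _ _ _ hg) _; rewrite ler_rat.
Qed.

Definition separating_arcs (G1 G2 R1 R2 : graph n) i j k l :=
  [/\ is_arc R1 i j, is_arc R2 k l,
      ltQ (G1 i j) (G2 i j) /\ ltQ (G2 k l) (G1 k l) &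
      ltQ (addQ (G1 i j) (G2 k l)) (addQ (gjoin G1 G2 i l) (gjoin G1 G2 k j))].

Lemma separating_arcs_of_solution (G1 G2 R1 R2 : graph n) y :
  subgraph R1 G1 -> subgraph R2 G2 ->
  (forall Gc, closed_graph Gc -> gle Gc R1 -> gle Gc G1) ->
  (forall Gc, closed_graph Gc -> gle Gc R2 -> gle Gc G2) ->
  solves (gjoin G1 G2) y -> ~ solves G1 y -> ~ solves G2 y ->
  exists i j k l, separating_arcs G1 G2 R1 R2 i j k l.
Proof.
move=> sub1 sub2 lub1 lub2 hy n1 n2.
have [i [j [a [Ea ha]]]] : exists u v g, R1 u v = Some g /\ ratr g < y u - y v.
  by apply: not_solves => h; apply: n1; apply: closure_solves lub1 h.
have [k [l [b [Eb hb]]]] : exists u v g, R2 u v = Some g /\ ratr g < y u - y v.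
  by apply: not_solves => h; apply: n2; apply: closure_solves lub2 h.
have Ga : G1 i j = Some a by rewrite -sub1 // /is_arc Ea.
have Gb : G2 k l = Some b by rewrite -sub2 // /is_arc Eb.
have ha' := solves_ltQ hy ha; have hb' := solves_ltQ hy hb.
exists i, j, k, l; split; rewrite /is_arc ?Ea ?Eb ?Ga ?Gb //.
- split; [apply: ltQ_maxQl ha' _ | apply: ltQ_maxQr hb' _]; by rewrite ?Ga ?Gb /=.
- exact: solves_ltQ_cross hy ha hb.
Qed.

Lemma solution_of_separating_arcs (G1 G2 R1 R2 : graph n) i j k l y0 :
  closed_graph G1 -> closed_graph G2 ->
  subgraph R1 G1 -> subgraph R2 G2 -> solves (gjoin G1 G2) y0 ->
  separating_arcs G1 G2 R1 R2 i j k l ->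
  exists2 y : 'I_n.+1 -> R, solves (gjoin G1 G2) y & ~ solves G1 y /\ ~ solves G2 y.
Proof.
move=> [_ hd1 hT1] [_ hd2 hT2] sub1 sub2 hy0 [ar1 ar2 [l1 l2] l3].
have [a Ea] : exists a, G1 i j = Some a.
  by have := sub1 i j ar1; move: ar1; rewrite /is_arc; case: (R1 i j) => [a _ <-|//]; exists a.
have [b Eb] : exists b, G2 k l = Some b.
  by have := sub2 k l ar2; move: ar2; rewrite /is_arc; case: (R2 k l) => [b _ <-|//]; exists b.
rewrite Ea Eb in l1 l2 l3.
have hT := gjoin_triangle hT1 hT2.
have hd v : gjoin G1 G2 v v = Some 0 by rewrite /gjoin hd1 hd2.
have hij : ltQ (Some a) (gjoin G1 G2 i j) by rewrite /gjoin Ea maxQ_ltQr.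
have hkl : ltQ (Some b) (gjoin G1 G2 k l) by rewrite /gjoin Eb maxQ_ltQl.
have [y hy [ya yb]] := tight_pair hT hd hy0 hij hkl l3.
exists y => //; split => hs.
  by have := hs _ _ _ Ea; lra.
by have := hs _ _ _ Eb; lra.
Qed.

End Join.

Theorem theorem6 (R : realType) (n : nat)
  (bd1 bd2 : set ('I_n -> R)) (G1 G2 R1 R2 : graph n) :
  is_BD bd1 -> is_BD bd2 ->
  bd1 !=set0 -> bd2 !=set0 ->
  closed_graph G1 -> closed_graph G2 ->
  bd1 = @bd_shape R n G1 -> bd2 = @bd_shape R n G2 ->
  subgraph R1 G1 -> subgraph R2 G2 ->
  is_closure R1 G1 -> is_closure R2 G2 ->
  let w := gjoin G1 G2 in
  (bd_hull (bd1 `|` bd2) <> bd1 `|` bd2 <->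
   exists i j k l,
     [/\ is_arc R1 i j, is_arc R2 k l,
         ltQ (G1 i j) (G2 i j) /\ ltQ (G2 k l) (G1 k l) &
         ltQ (addQ (G1 i j) (G2 k l)) (addQ (w i l) (w k j))]).
Proof.
move=> _ _ ne1 ne2 hG1 hG2 e1 e2 sub1 sub2 [lub1 _] [lub2 _] w.
have [x1 hx1] := ne1.
rewrite e1 e2 in ne1 ne2 *; rewrite bd_hull_shape_gjoin //.
split.
- move=> hne; apply: contrapT => hno; apply: hne.
  apply/seteqP; split => [x /bd_shapeP hx|]; last exact: bd_shape_gjoin_sup.
  have [h1|n1] := pselect (bd_shape G1 x); first by left.
  have [h2|n2] := pselect (bd_shape G2 x); first by right.
  case: hno; apply: separating_arcs_of_solution sub1 sub2 lub1 lub2 hx _ _.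
    by move/bd_shapeP.
  by move/bd_shapeP.
- move=> [i [j [k [l hsep]]]] heq.
  have hy0 : solves w (xval x1).
    by apply/bd_shapeP; apply: bd_shape_gjoin_sup; left; rewrite -e1.
  have [y hy [n1 n2]] := solution_of_separating_arcs hG1 hG2 sub1 sub2 hy0 hsep.
  have : bd_shape (gjoin G1 G2) (point_of y) by apply/bd_shape_point_of.
  rewrite heq.
  by case=> /bd_shape_point_of.
Qed.
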